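(* Let $n\ge 1$, let $\Omega_1,\ldots,\Omega_n$ be finite sets with $|\Omega_i|=k_i\ge 1$, and let $\Omega=\prod_{i=1}^n\Omega_i$. Let $M\ge 0$ and let $f:\Omega\to[0,M]$ be weakly nested canalizing (WNC) on $\Omega$. Put $\kappa=\max_i (k_i-1)/k_i$, so that $\kappa<1$. Then $$\operatorname{AS}[f]\le \frac{M^2}{4(1-\kappa)}.$$ In particular this holds for every nested canalizing function $f:(\mathbb{Z}/k\mathbb{Z})^n\to\mathbb{Z}/k\mathbb{Z}$, with values viewed as the real numbers $0,\ldots,k-1$ (here $M=k-1$ and $\kappa=(k-1)/k$).
   Context: Let $\Omega_1,\ldots,\Omega_n$ be finite sets with $|\Omega_i|=k_i\ge1$ (sizes $k_i=1$ are allowed), $\Omega=\prod_i\Omega_i$, and let $f:\Omega\to\mathbb{R}$. Weakly canalizing: $f$ is weakly canalizing with respect to coordinate $i$ and $(a,b)\in\Omega_i\times\mathbb{R}$ if $f(x)=b$ for every $x\in\Omega$ with $x_i=a$. No condition is imposed on the values of $f$ when $x_i\ne a$; in particular constant functions are weakly canalizing. Restriction: if $k_i\ge2$, then $f\restriction_{x_i\ne a}$ denotes the restriction of $f$ to $\Omega\cap\{x: x_i\ne a\}=\Omega_1\times\cdots\times(\Omega_i\setminus\{a\})\times\cdots\times\Omega_n$, regarded again as a product of finite sets. WNC, defined by induction on $|\Omega|$: if $|\Omega|=1$, every $f$ is WNC on $\Omega$. If $|\Omega|>1$, $f$ is WNC on $\Omega$ if it is weakly canalizing with respect to some $i,a,b$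 with $k_i\ge2$ and $f\restriction_{x_i\ne a}$ is WNC on $\Omega\cap\{x:x_i\ne a\}$. Nested canalizing (NC): a segment is a subset of $\mathbb{Z}/k\mathbb{Z}=\{0,\ldots,k-1\}$ of the form $\{0,\ldots,i\}$ or $\{i,\ldots,k-1\}$. A function $f:(\mathbb{Z}/k\mathbb{Z})^n\to\mathbb{Z}/k\mathbb{Z}$ (with $k\ge2$) is NC if there exist a permutation $\sigma$ of $\{1,\ldots,n\}$, segments $A_1,\ldots,A_n$ and values $c_1,\ldots,c_{n+1}\in\mathbb{Z}/k\mathbb{Z}$ with $c_n\ne c_{n+1}$ such that: - $f(x)=c_r$ whenever $x_{\sigma(1)}\notin A_1,\ldots,x_{\sigma(r-1)}\notin A_{r-1}$ and $x_{\sigma(r)}\in A_r$, for $1\le r\le n$; - $f(x)=c_{n+1}$ whenever $x_{\sigma(r)}\notin A_r$ for all $r$. Average sensitivity: $\Omega$ carries the uniform product probability measure. For $x\in\Omega$ and a coordinate $i$, let $\operatorname{Var}_i[f](x)$ be the variance of $y_i\mapsto f(x_1,\ldots,x_{i-1},y_i,x_{i+1},\ldots,x_n)$ for $y_i$ uniform on $\Omega_i$. The influence of coordinate $i$ is $\operatorname{Inf}_i[f]=\mathbf{E}_x[\operatorname{Var}_i[f](x)]$. This equals the Fourier-analytic definition $\langle f,L_if\rangle=\sum_{\alpha_i\ne0}\hat f(\alpha)^2$ for any orthonormal basis $(\phi_\alpha)$ with $\phi_0=1$. The average sensitivity (total influence) is $\operatorname{AS}[f]=\sum_{i=1}^n\operatorname{Inf}_i[f]$.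 *)

From HB Require Import structures.
From mathcomp Require Import all_boot all_order fingroup perm all_algebra.
Set Implicit Arguments. Unset Strict Implicit. Unset Printing Implicit Defensive.
Import Order.TTheory GRing.Theory Num.Theory.
Local Open Scope ring_scope.

Section Product.
Variables (n : nat) (Om : 'I_n -> finType).

Definition Omega := {dffun forall i : 'I_n, Om i}.

Definition upd (x : Omega) (i : 'I_n) (y : Om i) : Omega :=
  [ffun j => dfwith (fun j => x j) y j].

Definition inbox (B : forall j : 'I_n, {set Om j}) (x : Omega) : bool :=
  [forall j, x j \in B j].

(* the box with the value a removed from the i-th factor *)
Definition remove (B : forall j : 'I_n, {set Om j}) (i : 'I_n) (a : Om i) :
  forall j : 'I_n, {set Om j} :=
  fun j => [set v in B j | Tagged Om v != Tagged Om a].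

Variable R : realFieldType.

Definition weakly_canalizing_on (f : Omega -> R) (B : forall j, {set Om j})
  (i : 'I_n) (a : Om i) (b : R) : Prop :=
  forall x, inbox B x -> x i = a -> f x = b.

(* The inductive definition is the least predicate closed under the
   two clauses of the paper's definition by induction on |B|. *)
Inductive WNC_on (f : Omega -> R) : (forall j, {set Om j}) -> Prop :=
| WNC_one (B : forall j, {set Om j}) : (forall j, #|B j| = 1%N) -> WNC_on f B
| WNC_step (B : forall j, {set Om j}) (i : 'I_n) (a : Om i) (b : R) :
    (1 < #|B i|)%N -> a \in B i ->
    weakly_canalizing_on f B a b ->
    WNC_on f (remove B a) -> WNC_on f B.

Definition WNC (f : Omega -> R) : Prop := WNC_on f (fun j => [set: Om j]).

Definition Var_i (f : Omega -> R) (i : 'I_n) (x : Omega) : R :=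
  let mean := (\sum_(y : Om i) f (upd x y)) / #|Om i|%:R in
  (\sum_(y : Om i) (f (upd x y) - mean) ^+ 2) / #|Om i|%:R.

Definition Inf (f : Omega -> R) (i : 'I_n) : R :=
  (\sum_(x : Omega) Var_i f i x) / #|Omega|%:R.

Definition AS (f : Omega -> R) : R := \sum_(i < n) Inf f i.

(* kappa = max_i (k_i - 1)/k_i  (all these are >= 0) *)
Definition kappa : R :=
  \big[Num.max/0]_(i < n) ((#|Om i|%:R - 1) / #|Om i|%:R).

End Product.

Definition segment (k : nat) (A : {set 'I_k}) : Prop :=
  exists i : 'I_k, A = [set j : 'I_k | (j <= i)%N] \/ A = [set j : 'I_k | (i <= j)%N].

Definition cube (n k : nat) := Omega (fun _ : 'I_n => 'I_k).

(* sigma : permutation of the coordinates; A r = A_{r+1};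
   c r = c_{r+1} for r < n, c ord_max = c_{n+1}. *)
Definition NC (n k : nat) (g : cube n k -> 'I_k) : Prop :=
  exists (sigma : 'S_n) (A : 'I_n -> {set 'I_k}) (c : 'I_n.+1 -> 'I_k),
    (forall r, segment (A r)) /\
    c (inord n.-1) != c ord_max /\
    (forall (r : 'I_n) (x : cube n k),
        (forall s : 'I_n, (s < r)%N -> x (sigma s) \notin A s) ->
        x (sigma r) \in A r -> g x = c (widen_ord (leqnSn n) r)) /\
    (forall x : cube n k, (forall r : 'I_n, x (sigma r) \notin A r) -> g x = c ord_max).

(* Writing Var_i as a mean of squared differences gives AS[f] = E(Omega) / (2 |Omega|),
   where the energy E(B) of a box B sums, over the coordinates j, the squared differences
   of f along the j-lines of B, weighted by 1/|B_j|^2.  Removing a canalizing value a of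
   coordinate i leaves the energies of the other coordinates unchanged, since f is
   constant on the slab x_i = a, and adds to each i-line at most 2(|B_i| - 1)M^2, coming
   from the pairs that involve the canalized value.  As (K + 1)^2 >= 4K, induction along
   the WNC definition gives E(B) <= |B| M^2 / (2c) whenever c |B_j| <= 1 for all j, and
   c = 1 - kappa yields the bound.  A nested canalizing function is WNC: its canalizing
   segments are peeled off one value at a time. *)

From HB Require Import structures.
From mathcomp Require Import all_boot all_order fingroup perm all_algebra.
From mathcomp Require Import ring lra zify.
Import Order.TTheory GRing.Theory Num.Theory.
Set Implicit Arguments. Unset Strict Implicit. Unset Printing Implicit Defensive.
Local Open Scope ring_scope.

Section Boxes.
Variables (n : nat) (Om : 'I_n -> finType).
Implicit Types (x : Omega Om) (B : forall j : 'I_n, {set Om j}).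

Lemma upd_same x i (y : Om i) : upd x y i = y.
Proof. by rewrite /upd ffunE dfwith_in. Qed.

Lemma upd_other x i (y : Om i) j : i != j -> upd x y j = x j.
Proof. by move=> ij; rewrite /upd ffunE dfwith_out. Qed.

Lemma upd_upd x i (y z : Om i) : upd (upd x y) z = upd x z.
Proof.
apply/ffunP=> j; rewrite !ffunE.
case: (dfwithP (fun j => upd x y j) z j) => [|j' ij]; first by rewrite dfwith_in.
by rewrite upd_other // dfwith_out.
Qed.

Lemma upd_id x i : upd x (x i) = x.
Proof. by apply/ffunP=> j; rewrite ffunE; case: (dfwithP (fun j => x j) (x i) j). Qed.

Lemma upd_eq_id x i (y : Om i) : (upd x y == x) = (x i == y).
Proof. by apply/eqP/eqP => [<-|<-]; rewrite ?upd_same ?upd_id. Qed.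

Lemma inbox_i B x i : inbox B x -> x i \in B i.
Proof. by move/forallP. Qed.

Lemma inbox_upd B x i (y : Om i) :
  inbox B (upd x y) = (y \in B i) && [forall (j | j != i), x j \in B j].
Proof.
apply/forallP/andP => [H|[Hy /forallP H] j].
  split; first by have := H i; rewrite upd_same.
  by apply/forallP=> j; apply/implyP=> ji; have := H j; rewrite upd_other // eq_sym.
case: (eqVneq i j) => [<-|ij]; first by rewrite upd_same.
by rewrite upd_other //; have := H j; rewrite eq_sym ij.
Qed.

Lemma inbox_updW B x i (y : Om i) : inbox B x -> y \in B i -> inbox B (upd x y).
Proof. by move=> /forallP xB yB; rewrite inbox_upd yB; apply/forall_inP. Qed.

Lemma inbox_upd_upd B x i (y z : Om i) :
  inbox B (upd x y) -> z \in B i -> inbox B (upd x z).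
Proof. by rewrite !inbox_upd => /andP[_ ->] ->. Qed.

Lemma inbox_ext B B' x : (forall j, B j = B' j) -> inbox B x = inbox B' x.
Proof. by move=> E; apply: eq_forallb => j; rewrite E. Qed.

Lemma inbox_remove B i (a : Om i) x : inbox (remove B a) x = inbox B x && (x i != a).
Proof.
apply/forallP/andP => [H|[/forallP H xa] j].
  split; first by apply/forallP=> j; have := H j; rewrite inE => /andP[].
  by have := H i; rewrite inE eq_Tagged => /andP[].
rewrite inE H /=; case: (eqVneq i j) => [ij|ij]; first by subst j; rewrite eq_Tagged.
by apply: contra ij => /eqP[->].
Qed.

Lemma remove_other B i (a : Om i) j : i != j -> remove B a j = B j.
Proof.
move=> ij; apply/setP=> v; rewrite inE andb_idr // => _.
by apply/negP=> /eqP[E]; rewrite E eqxx in ij.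
Qed.

Lemma remove_same B i (a : Om i) : remove B a i = B i :\ a.
Proof. by apply/setP=> v; rewrite !inE eq_Tagged andbC. Qed.

Variable R : realFieldType.

Lemma sum_box_lines B i (a0 : Om i) (F : Omega Om -> R) : a0 \in B i ->
  \sum_(x | inbox B x) F x =
  \sum_(x | inbox B x && (x i == a0)) \sum_(y in B i) F (upd x y).
Proof.
move=> a0B.
rewrite (partition_big (fun x => x i) (mem (B i))); last by move=> x; apply: inbox_i.
rewrite [RHS]exchange_big /=; apply: eq_bigr => y yB.
rewrite (reindex_onto (fun x => upd x y) (fun x => upd x a0)); last first.
  by move=> x /andP[_ /eqP xy]; rewrite upd_upd -xy upd_id.
apply: eq_bigl => x; rewrite upd_same eqxx andbT upd_upd upd_eq_id.
case: (eqVneq (x i) a0) => [xa|]; rewrite ?andbF //= andbT.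
apply/idP/idP => [xB|/andP[xB _]]; last exact: inbox_updW.
by rewrite -(upd_id x i) xa andbT; apply: inbox_upd_upd xB a0B.
Qed.

Lemma sum_box_line_invariant B i (a0 : Om i) (F : Omega Om -> R) : a0 \in B i ->
  (forall x (y : Om i), F (upd x y) = F x) ->
  \sum_(x | inbox B x) F x = #|B i|%:R * \sum_(x | inbox B x && (x i == a0)) F x.
Proof.
move=> a0B FI; rewrite (sum_box_lines F a0B) mulr_sumr; apply: eq_bigr => x _.
by under eq_bigr do rewrite FI; rewrite sumr_const mulr_natl.
Qed.

End Boxes.

Lemma energy_peel_step (R : realFieldType) (K c X Z Q E : R) :
  0 < K -> 0 < c -> c * (K + 1) <= 1 -> 0 <= X -> 0 <= Q -> Z <= X + 2 * (K * Q) ->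
  X / K + E <= K * Q / (2 * c) -> Z / (K + 1) + E <= (K + 1) * Q / (2 * c).
Proof.
move=> K0 c0 cK X0 Q0 ZX IH.
have K1 : 0 < K + 1 by lra.
have XK : X / (K + 1) <= X / K by rewrite ler_wpM2l // lef_pV2 ?posrE; lra.
have Kc : 4 * K * c <= K + 1.
  have cK4 : 4 * K * (c * (K + 1)) <= 4 * K by rewrite ler_piMr //; lra.
  have : 4 * K * c * (K + 1) <= (K + 1) * (K + 1) by have := sqr_ge0 (K - 1); nra.
  by rewrite ler_pM2r.
have KQ : 2 * (K * Q) / (K + 1) <= Q / (2 * c).
  by rewrite ler_pdivrMr // mulrAC ler_pdivlMr; nra.
have : Z / (K + 1) <= X / K + Q / (2 * c).
  apply: le_trans (_ : (X + 2 * (K * Q)) / (K + 1) <= _).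
    by rewrite ler_pM2r ?invr_gt0.
  by rewrite mulrDl; lra.
by rewrite [(K + 1) * Q]mulrDl mul1r [(K * Q + Q) / _]mulrDl; lra.
Qed.

Section Energy.
Variables (n : nat) (Om : 'I_n -> finType) (R : realFieldType).
Variables (f : Omega Om -> R) (M : R).
Implicit Types (x : Omega Om) (B : forall j : 'I_n, {set Om j}).

Definition line_energy x i (S : {set Om i}) :=
  \sum_(y in S) \sum_(z in S) (f (upd x y) - f (upd x z)) ^+ 2.

Definition coord_energy B i := \sum_(x | inbox B x) line_energy x (B i).

Definition energy B := \sum_(i < n) coord_energy B i / #|B i|%:R ^+ 2.

Definition volume B := \sum_(x | inbox B x) (1 : R).

Hypothesis f_range : forall x, 0 <= f x <= M.

Lemma line_energy_upd x i (y : Om i) (S : {set Om i}) :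
  line_energy (upd x y) S = line_energy x S.
Proof. by apply: eq_bigr => y' _; apply: eq_bigr => z _; rewrite !upd_upd. Qed.

Lemma line_energy_ge0 x i (S : {set Om i}) : 0 <= line_energy x S.
Proof. by apply: sumr_ge0 => y _; apply: sumr_ge0 => z _; apply: sqr_ge0. Qed.

Lemma volume_ge0 B : 0 <= volume B.
Proof. exact: sumr_ge0. Qed.

Lemma coord_energy_lines B i (a0 : Om i) : a0 \in B i ->
  coord_energy B i / #|B i|%:R ^+ 2 =
  (\sum_(x | inbox B x && (x i == a0)) line_energy x (B i)) / #|B i|%:R.
Proof.
move=> a0B; have Bi0 : #|B i|%:R != 0 :> R.
  by rewrite pnatr_eq0 -lt0n card_gt0; apply/set0Pn; exists a0.
rewrite /coord_energy (sum_box_line_invariant a0B) => [|x y]; last exact: line_energy_upd.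
by field.
Qed.

Lemma volume_lines B i (a0 : Om i) : a0 \in B i ->
  volume B = #|B i|%:R * \sum_(x | inbox B x && (x i == a0)) 1.
Proof. by move=> a0B; apply: sum_box_line_invariant. Qed.

Section Canalized.
Variables (B : forall j : 'I_n, {set Om j}) (i : 'I_n) (a : Om i) (b : R).
Hypotheses (canal : weakly_canalizing_on f B a b) (aB : a \in B i).

Lemma coord_energy_remove_other j : i != j -> coord_energy (remove B a) j = coord_energy B j.
Proof.
move=> ij; rewrite /coord_energy remove_other // [RHS](bigID (fun x => x i == a)) /=.
rewrite [X in _ = X + _]big1 ?add0r => [|x /andP[xB /eqP xa]]; last first.
  apply: big1 => y yB; apply: big1 => z zB.
  by rewrite !canal ?subrr ?expr0n ?upd_other 1?eq_sym // inbox_updW.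
by apply: eq_bigl => x; rewrite inbox_remove.
Qed.

Lemma line_energy_remove_le x : inbox B x ->
  line_energy x (B i) <= line_energy x (B i :\ a) + 2 * (#|B i :\ a|%:R * M ^+ 2).
Proof.
move=> xB; have fa : f (upd x a) = b by rewrite canal ?upd_same ?inbox_updW.
rewrite /line_energy (big_setD1 _ aB) (big_setD1 _ aB) /= fa subrr expr0n add0r.
under [X in _ + X <= _]eq_bigr => y _ do rewrite (big_setD1 _ aB) fa /=.
rewrite big_split /=.
have sq_le (u v : R) : 0 <= u <= M -> 0 <= v <= M -> (u - v) ^+ 2 <= M ^+ 2 by nra.
have line_le (g : Om i -> R) : (forall z, g z <= M ^+ 2) ->
    \sum_(z in B i :\ a) g z <= #|B i :\ a|%:R * M ^+ 2.
  by move=> gM; apply: le_trans (ler_sum _ (fun z _ => gM z)) _; rewrite sumr_const mulr_natl.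
have := line_le _ (fun z => sq_le _ _ (f_range (upd x a)) (f_range (upd x z))).
have := line_le _ (fun z => sq_le _ _ (f_range (upd x z)) (f_range (upd x a))).
rewrite fa; lra.
Qed.

End Canalized.

Lemma energy_WNC_le B c : WNC_on f B -> 0 < c -> (forall j, c * #|B j|%:R <= 1) ->
  energy B <= volume B * M ^+ 2 / (2 * c).
Proof.
move=> wnc; elim: wnc c => {B} [B B1|B i a b Bi2 aB canal _ IH] c c0 cB.
  rewrite /energy big1 => [|j _]; last first.
    rewrite /coord_energy big1 ?mul0r // => x _.
    have /cards1P [v ->] : #|B j| == 1%N by rewrite B1.
    by rewrite /line_energy !big_set1 subrr expr0n.
  by apply: divr_ge0; [rewrite mulr_ge0 ?volume_ge0 ?sqr_ge0 | lra].
have [a0 a0Ba] : exists a0, a0 \in B i :\ a.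
  by apply/set0Pn; rewrite -card_gt0; move: Bi2; rewrite (cardsD1 a) aB.
have /andP[a0a a0B] : (a0 != a) && (a0 \in B i) by rewrite -in_setD1.
have slab x : (inbox (remove B a) x && (x i == a0)) = (inbox B x && (x i == a0)).
  by rewrite inbox_remove -andbA; case: (eqVneq (x i) a0) => [->|]; rewrite ?andbF ?a0a ?andbT.
set K : R := #|B i :\ a|%:R.
have BiK : #|B i|%:R = K + 1 by rewrite (cardsD1 a) aB natrD addrC.
have K0 : 0 < K by rewrite ltr0n card_gt0; apply/set0Pn; exists a0.
have cBa j : c * #|remove B a j|%:R <= 1.
  apply: le_trans (cB j); rewrite ler_pM2l // ler_nat subset_leq_card //.
  by apply/subsetP => v; rewrite inE => /andP[].
have := IH c c0 cBa; rewrite /energy (bigD1 i) //= [in X in _ -> X](bigD1 i) //=.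
rewrite (eq_bigr (fun j => coord_energy B j / #|B j|%:R ^+ 2)) => [|j ji]; last first.
  by rewrite (coord_energy_remove_other canal) 1?eq_sym // remove_other // eq_sym.
have a0Ba' : a0 \in remove B a i by rewrite remove_same.
rewrite (coord_energy_lines a0B) (coord_energy_lines a0Ba').
rewrite (volume_lines a0B) (volume_lines a0Ba') !(eq_bigl _ _ slab) remove_same BiK -/K.
set E := \sum_(j < n | j != i) _; set N0 := \sum_(x | _) 1.
rewrite -[_ * N0 * _]mulrA -[_ * N0 * _]mulrA.
apply: energy_peel_step => //; first by rewrite -BiK.
- by apply: sumr_ge0 => x _; apply: line_energy_ge0.
- by rewrite mulr_ge0 ?sumr_ge0 ?sqr_ge0.
rewrite mulr_suml !mulr_sumr -big_split /=; apply: ler_sum => x /andP[xB _].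
by rewrite mul1r (line_energy_remove_le canal).
Qed.

End Energy.

Lemma variance_pairwise (R : numFieldType) (T : finType) (h : T -> R) : (0 < #|T|)%N ->
  let m := (\sum_y h y) / #|T|%:R in
  (\sum_y (h y - m) ^+ 2) / #|T|%:R =
  (\sum_y \sum_z (h y - h z) ^+ 2) / (2 * #|T|%:R ^+ 2).
Proof.
move=> T0 m.
set A := \sum_y h y ^+ 2; set S := \sum_y h y; set k := #|T|%:R.
have Em : \sum_y (h y - m) ^+ 2 = A - (S * m) *+ 2 + m ^+ 2 *+ #|T|.
  under eq_bigr do rewrite sqrrB.
  by rewrite big_split /= sumrB sumrMnl -big_distrl sumr_const.
have Ey y : \sum_z (h y - h z) ^+ 2 = h y ^+ 2 *+ #|T| - (h y * S) *+ 2 + A.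
  under eq_bigr do rewrite sqrrB.
  by rewrite big_split /= sumrB sumrMnl sumr_const -mulr_sumr.
have Eyz : \sum_y \sum_z (h y - h z) ^+ 2 = A *+ #|T| - (S * S) *+ 2 + A *+ #|T|.
  under eq_bigr do rewrite Ey.
  by rewrite big_split /= sumrB !sumrMnl sumr_const -mulr_suml.
have k0 : k != 0 by rewrite pnatr_eq0 -lt0n.
rewrite Em Eyz -[(S * m) *+ 2]mulr_natr -[m ^+ 2 *+ #|T|]mulr_natr.
rewrite -[A *+ #|T|]mulr_natr -[(S * S) *+ 2]mulr_natr -/k /m -/S -/k.
by field.
Qed.

Section Influence.
Variables (n : nat) (Om : 'I_n -> finType) (R : realFieldType).
Hypothesis Om_gt0 : forall i, (0 < #|Om i|)%N.

Lemma inbox_setT (x : Omega Om) : inbox (fun j => [set: Om j]) x.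
Proof. by apply/forallP => j; rewrite in_setT. Qed.

Lemma AS_energy (f : Omega Om -> R) :
  AS f = energy f (fun j => [set: Om j]) / (2 * volume R (fun j => [set: Om j])).
Proof.
have sum_setT (F : Omega Om -> R) : \sum_(x | inbox (fun j => [set: Om j]) x) F x = \sum_x F x.
  by apply: eq_bigl => x; rewrite inbox_setT.
rewrite /volume sum_setT sumr_const /AS /energy mulr_suml; apply: eq_bigr => i _.
rewrite /Inf /coord_energy sum_setT cardsT.
under eq_bigr do rewrite /Var_i (variance_pairwise _ (Om_gt0 i)).
rewrite -mulr_suml.
have line_setT x : line_energy f x [set: Om i] =
    \sum_(y : Om i) \sum_(z : Om i) (f (upd x y) - f (upd x z)) ^+ 2.
  rewrite /line_energy (eq_bigl xpredT) => [|y]; last by rewrite in_setT.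
  by apply: eq_bigr => y _; apply: eq_bigl => z; rewrite in_setT.
under [in RHS]eq_bigr do rewrite line_setT.
by rewrite !invfM; ring.
Qed.

Lemma kappa_ge j : (#|Om j|%:R - 1) / #|Om j|%:R <= kappa Om R.
Proof. exact: le_bigmax. Qed.

Lemma kappa_lt1 : kappa Om R < 1.
Proof.
apply: bigmax_lt => // i _; have k0 : 0 < #|Om i|%:R :> R by rewrite ltr0n.
by rewrite ltr_pdivrMr // mul1r; lra.
Qed.

Lemma AS_WNC_le (f : Omega Om -> R) (M : R) : (forall x, 0 <= f x <= M) -> WNC f ->
  AS f <= M ^+ 2 / (4 * (1 - kappa Om R)).
Proof.
move=> f_range wnc; set c := 1 - kappa Om R.
have c0 : 0 < c by rewrite subr_gt0 kappa_lt1.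
have cB j : c * #|[set: Om j]|%:R <= 1.
  have k0 : 0 < #|Om j|%:R :> R by rewrite ltr0n.
  by have := kappa_ge j; rewrite cardsT ler_pdivrMr // /c; nra.
rewrite AS_energy; have := energy_WNC_le f_range wnc c0 cB.
set V := volume R _; have [->|V0] := eqVneq V 0.
  by rewrite mulr0 invr0 mulr0 divr_ge0 ?sqr_ge0 //; lra.
have V_gt0 : 0 < V by rewrite lt_def V0 volume_ge0.
have -> : M ^+ 2 / (4 * c) = V * M ^+ 2 / (2 * c) / (2 * V).
  by field; rewrite !gt_eqF.
by move=> HE; rewrite ler_pM2r ?invr_gt0 ?mulr_gt0.
Qed.

End Influence.

Section WNCBoxes.
Variables (n : nat) (Om : 'I_n -> finType) (R : realFieldType) (f : Omega Om -> R).
Implicit Types (x : Omega Om) (B : forall j : 'I_n, {set Om j}).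

Lemma WNC_on_ext B B' : (forall j, B j = B' j) -> WNC_on f B -> WNC_on f B'.
Proof.
move=> E wnc; elim: wnc B' E => {B} [B B1|B i a b Bi2 aB canal _ IH] B' E.
  by apply: WNC_one => j; rewrite -E.
apply: (@WNC_step _ _ _ f B' i a b); rewrite -?E //.
  by move=> x xB; apply: canal; rewrite (inbox_ext _ E).
by apply: IH => j; apply/setP => v; rewrite !inE E.
Qed.

Lemma card_remove B i (a : Om i) : a \in B i ->
  (\sum_(j < n) #|remove B a j|).+1 = (\sum_(j < n) #|B j|)%N.
Proof.
move=> aB; rewrite (bigD1 i) //= [RHS](bigD1 i) //= remove_same (cardsD1 a (B i)) aB.
rewrite add1n addSn; congr (_ + _).+1.
by apply: eq_bigr => j ji; rewrite remove_other // eq_sym.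
Qed.

Lemma WNC_on_const B b : (forall j, 0 < #|B j|)%N ->
  (forall x, inbox B x -> f x = b) -> WNC_on f B.
Proof.
move: {-1}(\sum_(j < n) #|B j|)%N (leqnn (\sum_(j < n) #|B j|)) => m.
elim: m B => [|m IH] B Bm B_gt0 fb.
all: case: (boolP [forall j, #|B j| == 1%N]) => [/forallP B1|/forallPn [j Bj]].
- by apply: WNC_one => j; apply/eqP.
- by have := B_gt0 j; move: Bm; rewrite (bigD1 j) //=; lia.
- by apply: WNC_one => j; apply/eqP.
have Bj2 : (1 < #|B j|)%N by have := B_gt0 j; move/negP: Bj; lia.
have [a aB] : exists a, a \in B j by apply/set0Pn; rewrite -card_gt0.
apply: (WNC_step (a := a) (b := b)) => // [x xB _|]; first exact: fb.
apply: IH => [|j'|x]; first by move: Bm; rewrite -(card_remove aB).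
  case: (eqVneq j j') => [<-|jj']; last by rewrite remove_other.
  by rewrite remove_same; move: Bj2; rewrite (cardsD1 a) aB; lia.
by rewrite inbox_remove => /andP[/fb].
Qed.

Lemma WNC_on_peel B i (S : {set Om i}) b : (forall j, 0 < #|B j|)%N ->
  (forall x, inbox B x -> x i \in S -> f x = b) ->
  (B i :\: S != set0 -> WNC_on f (dfwith B (B i :\: S))) -> WNC_on f B.
Proof.
move: {-1}#|B i :&: S| (erefl #|B i :&: S|) => m.
elim: m B => [|m IH] B BSm B_gt0 fb rest.
  have /setDidPl BiS : [disjoint B i & S] by rewrite -setI_eq0 -cards_eq0 -BSm.
  apply: WNC_on_ext (rest _) => [j|]; last by rewrite BiS -card_gt0.
  by case: (dfwithP B (B i :\: S) j).
have [a /setIP[aB aS]] : exists a, a \in B i :&: S by apply/set0Pn; rewrite -card_gt0 BSm.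
have [Bi2|Bi1] := ltnP 1 #|B i|; last first.
  have /cards1P [v Bv] : #|B i| == 1%N by have := B_gt0 i; lia.
  apply: (WNC_on_const (b := b) B_gt0) => x xB; apply: fb => //.
  by move: (inbox_i i xB) aB; rewrite Bv !inE => /eqP -> /eqP <-.
apply: (WNC_step Bi2 aB) => [x xB xa|]; first by apply: fb; rewrite ?xa.
have RiS : remove B a i :\: S = B i :\: S.
  by apply/setP => v; rewrite remove_same !inE; case: eqVneq => // ->; rewrite aS.
apply: IH => [|j|x|]; first 1 last.
- case: (eqVneq i j) => [<-|ij]; last by rewrite remove_other.
  by rewrite remove_same; move: Bi2; rewrite (cardsD1 a) aB; lia.
- by rewrite inbox_remove => /andP[/fb].
- rewrite RiS => /rest; apply: WNC_on_ext => j.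
  case: (dfwithP B (B i :\: S) j) => [|j' ij]; first by rewrite dfwith_in.
  by rewrite dfwith_out // remove_other.
apply/eqP; rewrite -eqSS -BSm (cardsD1 a (B i :&: S)) !inE aB aS remove_same; apply/eqP.
by rewrite /= add1n; congr _.+1; apply: eq_card => v; rewrite !inE andbA.
Qed.

End WNCBoxes.

Section NestedCanalizing.
Variables (n k : nat) (R : realFieldType) (g : cube n k -> 'I_k).
Variables (sigma : 'S_n) (A : 'I_n -> {set 'I_k}) (c : 'I_n.+1 -> 'I_k).
Hypothesis g_canal : forall (r : 'I_n) (x : cube n k),
  (forall s : 'I_n, (s < r)%N -> x (sigma s) \notin A s) ->
  x (sigma r) \in A r -> g x = c (widen_ord (leqnSn n) r).
Hypothesis g_last : forall x : cube n k,
  (forall r : 'I_n, x (sigma r) \notin A r) -> g x = c ord_max.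

Let f (x : cube n k) : R := (g x)%:R.

(* the inputs that pass none of the first [r] canalizing tests *)
Definition NC_box (r : nat) : forall j : 'I_n, {set 'I_k} :=
  fun j => if ((sigma^-1)%g j < r)%N then ~: A ((sigma^-1)%g j) else setT.

Lemma NC_box_notin r x (s : 'I_n) :
  inbox (NC_box r) x -> (s < r)%N -> x (sigma s) \notin A s.
Proof. by move=> /forallP /(_ (sigma s)); rewrite /NC_box permK => + sr; rewrite sr inE. Qed.

Lemma NC_box_succ r (rn : (r < n)%N) (i := sigma (Ordinal rn)) j :
  @dfwith _ _ (NC_box r) i (NC_box r i :\: A (Ordinal rn)) j = NC_box r.+1 j.
Proof.
case: (@dfwithP _ _ (NC_box r) i (NC_box r i :\: A (Ordinal rn)) j) => [|j' sj].
  by rewrite /NC_box permK /= ltnn ltnSn setTD.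
rewrite /NC_box ltnS [in RHS]leq_eqVlt; case: eqP => // jr; case/eqP: sj.
by rewrite /i -[j'](permKV sigma); congr (sigma _); apply: val_inj.
Qed.

Lemma NC_box_WNC d : (d <= n)%N -> (forall j, 0 < #|NC_box (n - d) j|)%N ->
  WNC_on f (NC_box (n - d)).
Proof.
elim: d => [|d IH] dn B_gt0.
  apply: (WNC_on_const (b := (c ord_max)%:R) B_gt0) => x xB.
  by rewrite /f g_last // => r; apply: (NC_box_notin xB); rewrite subn0.
have rn : (n - d.+1 < n)%N by lia.
set r : 'I_n := Ordinal rn.
apply: (WNC_on_peel (i := sigma r) (S := A r) (b := (c (widen_ord (leqnSn n) r))%:R)) => //.
  by move=> x xB xA; rewrite /f (g_canal (r := r)) // => s sr; apply: (NC_box_notin xB).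
set S := NC_box (n - d.+1) (sigma r) :\: A r.
have box_succ j : @dfwith _ _ (NC_box (n - d.+1)) (sigma r) S j = NC_box (n - d) j.
  by rewrite -(subnSK dn); exact: NC_box_succ.
move=> S_gt0; apply: WNC_on_ext (IH (ltnW dn) _) => j; first by rewrite box_succ.
rewrite -box_succ; case: (@dfwithP _ _ (NC_box (n - d.+1)) (sigma r) S j) => [|j' _].
  by rewrite card_gt0.
exact: B_gt0.
Qed.

End NestedCanalizing.

Lemma NC_WNC (n k : nat) (R : realFieldType) (g : cube n k -> 'I_k) : (0 < k)%N -> NC g ->
  WNC (fun x : cube n k => (g x)%:R : R).
Proof.
move=> k_gt0 [sigma [A [c [_ [_ [g_canal g_last]]]]]].
have := NC_box_WNC R g_canal g_last (leqnn n); rewrite subnn.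
have box0 j : NC_box sigma A 0 j = [set: 'I_k] by rewrite /NC_box ltn0.
by move=> /(_ _)/WNC_on_ext; apply => // j; rewrite box0 cardsT card_ord.
Qed.

Lemma kappa_cube (n k : nat) (R : realFieldType) : (0 < n)%N -> (0 < k)%N ->
  kappa (fun _ : 'I_n => 'I_k) R = (k%:R - 1) / k%:R.
Proof.
move=> n_gt0 k_gt0; apply/le_anti/andP; split.
  apply: bigmax_le => [|i _]; last by rewrite card_ord.
  by rewrite divr_ge0 // subr_ge0 ler1n.
by have := kappa_ge (fun _ : 'I_n => 'I_k) R (Ordinal n_gt0); rewrite card_ord.
Qed.

Theorem theorem1 (R : realFieldType) (n : nat) (hn : (1 <= n)%N) :
  (forall (Om : 'I_n -> finType), (forall i, 0 < #|Om i|)%N ->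
   forall (M : R) (f : Omega Om -> R),
     0 <= M -> (forall x, 0 <= f x <= M) -> WNC f ->
     kappa Om R < 1 /\ AS f <= M ^+ 2 / (4 * (1 - kappa Om R)))
  /\
  (forall (k : nat), (2 <= k)%N -> forall g : cube n k -> 'I_k, NC g ->
     AS (fun x => ((g x : nat)%:R : R))
       <= (k%:R - 1) ^+ 2 / (4 * (1 - (k%:R - 1) / k%:R))).
Proof.
split=> [Om Om_gt0 M f _ f_range wnc | k k2 g ncg].
  by split; [exact: kappa_lt1 | exact: AS_WNC_le].
have k_gt0 : (0 < k)%N by lia.
have g_range x : 0 <= ((g x)%:R : R) <= k%:R - 1.
  by rewrite ler0n lerBrDr natr1 ler_nat /=.
rewrite -(@kappa_cube n k R hn k_gt0); apply: AS_WNC_le g_range (NC_WNC R k_gt0 ncg) => i.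
by rewrite card_ord.
Qed.
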